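(* In the model described in the context, with $\tilde k(p)=(1+\theta)p+\alpha(p-p^2)$ for $\theta\ge0$ and $\alpha\ge0$, the indemnity $I\equiv0$ is never optimal.
   Context: Let $X\ge0$ be a random variable with $\mathbb{P}(X=0)=1-q$, where $q\in(0,1]$, and with density $q\lambda e^{-\lambda x}$ on $(0,\infty)$, where $\lambda>0$. So $S_X(t)=qe^{-\lambda t}$ for $t\ge0$. $\mathcal{I}_c$ is the set of $I:[0,\infty)\to[0,\infty)$ with $0\le I(x)\le x$ and $0\le I(x)-I(y)\le x-y$ for $0\le y\le x$. For $Y\ge0$ with $S_Y(t)=\mathbb{P}(Y>t)$, the premium is $$\pi(Y)=\int_0^\infty\tilde k(S_Y(t))\,dt.$$ This is the expected value principle with loading $\theta$ plus $\alpha$ times the Gini deviation. The buyer has wealth $w$ and utility $u$ with $u'(x)=e^{-\gamma x}$, $\gamma>0$. She chooses $I\in\mathcal{I}_c$ to maximize $\mathbb{E}[u(w-X+I(X)-\pi(I(X)))]$; the buyer's distortion is the identity. *)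

From HB Require Import structures.
From mathcomp Require Import all_boot all_order all_algebra.
From mathcomp Require Import all_classical all_reals all_analysis.
Set Implicit Arguments. Unset Strict Implicit. Unset Printing Implicit Defensive.
Import Order.TTheory GRing.Theory Num.Theory.
Import numFieldNormedType.Exports.
Local Open Scope classical_set_scope.
Local Open Scope ring_scope.

Section Model.
Variable R : realType.

(* Law of X: P(X = 0) = 1 - q, density q*lam*exp(-lam x) on (0,oo).
   EX q lam g = E[g(X)] for g : R -> \bar R. *)
Definition EX (q lam : R) (g : R -> \bar R) : \bar R :=
  ((1 - q)%:E * g 0%R
   + q%:E * \int[lebesgue_measure]_(x in `]0%R, +oo[) (g x * (lam * expR (- (lam * x)))%:E))%E.

Definition survI (q lam : R) (I : R -> R) (t : R) : R :=
  fine (EX q lam (fun x => (if (t < I x)%R then 1 else 0)%:E)).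

(* distortion: expected value principle with loading theta plus alpha * Gini deviation *)
Definition ktilde (theta alpha p : R) : R := (1 + theta) * p + alpha * (p - p ^+ 2).

Definition premium (q lam theta alpha : R) (I : R -> R) : R :=
  fine (\int[lebesgue_measure]_(t in `[0%R, +oo[)
          (ktilde theta alpha (survI q lam I t))%:E).

(* admissible indemnities I_c (only values on [0,oo) matter) *)
Definition Ic (I : R -> R) : Prop :=
  (forall x, 0 <= x -> 0 <= I x <= x) /\
  (forall x y, 0 <= y -> y <= x -> 0 <= I x - I y <= x - y).

Definition EU (q lam theta alpha w : R) (u : R -> R) (I : R -> R) : \bar R :=
  EX q lam (fun x => (u (w - x + I x - premium q lam theta alpha I))%:E).

End Model.

From HB Require Import structures.
From mathcomp Require Import all_boot all_order all_algebra.
From mathcomp Require Import all_classical all_reals all_analysis.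
From mathcomp Require Import measurable_realfun ring lra.
Import Order.TTheory GRing.Theory Num.Theory.
Import numFieldNormedType.Exports.
Local Open Scope classical_set_scope.
Local Open Scope ring_scope.

(* With u' = exp (- gamma x), u is affine in - exp (- gamma x), so the expected
   utility of an indemnity I with premium P is c - B exp (gamma P) E[exp (gamma (X - I X))],
   while I = 0 gives c - B E[exp (gamma X)].  If gamma >= lam this moment is
   infinite and full insurance, which pays a finite premium, is strictly better.
   If gamma < lam, the stop-loss contract (X - d)_+ lowers E[exp (gamma (X - I X))]
   by q gamma / (lam - gamma) exp (- (lam - gamma) d), whereas a Chernoff bound on
   the survival function of (X - d)_+ makes its premium O(exp (- (lam - gamma / 2) d));
   for a large deductible d the gain outweighs the premium. *)


Section integral_monotonicity.
Context {d} {T : measurableType d} {R : realType}.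
Variable mu : {measure set T -> \bar R}.

(* No measurability is needed: the integral is the difference of the suprema
   of the integrals of simple functions below the positive and negative parts. *)
Lemma le_integral_pointwise (D : set T) (f g : T -> \bar R) :
  (forall x, D x -> (f x <= g x)%E) ->
  (\int[mu]_(x in D) f x <= \int[mu]_(x in D) g x)%E.
Proof.
move=> fg; rewrite /integral /=.
have le_sup (F G : T -> \bar R) : (forall x, (F x <= G x)%E) ->
  (ereal_sup [set sintegral mu (HBNNSimple.NonNegSimpleFun.sort h)
       | h in [set h | forall x, ((HBNNSimple.NonNegSimpleFun.sort h x)%:E <= F x)%E]]
  <= ereal_sup [set sintegral mu (HBNNSimple.NonNegSimpleFun.sort h)
       | h in [set h | forall x, ((HBNNSimple.NonNegSimpleFun.sort h x)%:E <= G x)%E]])%E.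
  move=> FG; apply: ge_ereal_sup => _ [h hle <-]; apply: ereal_sup_ubound.
  by exists h => // x; exact: le_trans (hle x) (FG x).
have fg_patch x : ((f \_ D) x <= (g \_ D) x)%E.
  by rewrite /patch; case: ifPn => // /[!inE]; exact: fg.
apply: leeB; apply: le_sup => x.
- by apply: (@funepos_le _ _ setT) => //; rewrite ?in_setT // => y _; exact: fg_patch.
- by apply: (@funeneg_le _ _ setT) => //; rewrite ?in_setT // => y _; exact: fg_patch.
Qed.

End integral_monotonicity.

Section exponential_calculus.
Context {R : realType}.
Local Notation mu := (@lebesgue_measure R).

Lemma is_derive_expRM (k x : R) :
  is_derive x 1 (fun y => expR (k * y)) (k * expR (k * x)).
Proof.
have dk : is_derive x 1 (fun y : R => k * y) k.
  have -> : (fun y : R => k * y) = k \*: id by apply/funext.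
  by have := is_deriveZ k (is_derive_id x (1 : R)); rewrite /GRing.scale /= mulr1.
have := is_derive1_comp (is_derive_expR (k * x)) dk.
by rewrite mulrC.
Qed.

Lemma cara_utility (u : R -> R) (gamma : R) : 0 < gamma ->
  (forall x : R, is_derive x 1 u (expR (- (gamma * x)))) ->
  forall y, u y = u 0 + gamma^-1 - gamma^-1 * expR (- gamma * y).
Proof.
move=> g0 du y.
pose h z := u z + gamma^-1 * expR (- gamma * z).
have dh (x : R) : is_derive x 1 h 0.
  have := is_deriveD (du x) (is_deriveZ gamma^-1 (is_derive_expRM (- gamma) x)).
  by rewrite /GRing.scale /= !mulNr mulrN mulrA mulVf ?gt_eqF // mul1r subrr.
have := is_derive_0_is_cst y 0 dh.
by rewrite /h mulr0 expR0 mulr1 => <-; rewrite addrK.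
Qed.

Lemma continuous_expRM (k : R) : continuous (fun y : R => expR (k * y)).
Proof.
move=> x; apply/differentiable_continuous/derivable1_diffP.
exact: (@ex_derive _ _ _ _ _ _ _ (is_derive_expRM k x)).
Qed.

Lemma measurable_expRM (D : set R) (k : R) : measurable_fun D (fun y : R => expR (k * y)).
Proof. by apply: measurable_funTS; exact: continuous_measurable_fun (continuous_expRM k). Qed.

Lemma integral_expRM_itv_oo (c a : R) : 0 < c ->
  (\int[mu]_(x in `]a, +oo[) (expR (- c * x))%:E = (expR (- c * a) / c)%:E)%E.
Proof.
move=> c0.
rewrite integral_itv_obnd_cbnd; last by apply/measurable_EFinP; exact: measurable_expRM.
pose F x := - c^-1 * expR (- c * x).
have dF x : is_derive x (1 : R) F (expR (- c * x)).
  have := is_deriveZ (- c^-1) (is_derive_expRM (- c) x).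
  by rewrite /GRing.scale /= mulrA mulrNN mulVf ?gt_eqF // mul1r.
rewrite (@ge0_continuous_FTC2y _ (fun x => expR (- c * x)) F a 0).
- by rewrite /F sub0e -EFinN mulNr opprK mulrC.
- by move=> x _; exact: expR_ge0.
- by apply: continuous_subspaceT; exact: continuous_expRM.
- rewrite /F -(mulr0 (- c^-1)); apply: cvgMl_tmp.
  rewrite (_ : (fun x => expR (- c * x)) = (fun z => expR (- z)) \o *%R c); last first.
    by apply: funext => x; rewrite /= mulNr.
  apply: (@cvg_comp _ _ _ _ _ _ (pinfty_nbhs R)); last exact: cvgr_expR.
  exact: gt0_cvgMry.
- by move=> x _; exact: (@ex_derive _ _ _ _ _ _ _ (dF x)).
- apply/cvg_at_right_filter/differentiable_continuous/derivable1_diffP.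
  exact: (@ex_derive _ _ _ _ _ _ _ (dF a)).
- by move=> x _; rewrite derive1E; exact: derive_val.
Qed.

Lemma integrable_expRM_itv_oo (c a : R) : 0 < c ->
  mu.-integrable `]a, +oo[ (fun x => (expR (- c * x))%:E).
Proof.
move=> c0; apply/integrableP; split.
  by apply/measurable_EFinP; exact: measurable_expRM.
under eq_integral do rewrite /= ger0_norm ?expR_ge0 //.
by rewrite integral_expRM_itv_oo // ltry.
Qed.

Lemma integrable_scaled_expRM_itv_oo (K c a : R) : 0 < c ->
  mu.-integrable `]a, +oo[ (fun x => (K * expR (- c * x))%:E).
Proof.
move=> c0.
have : mu.-integrable `]a, +oo[ (fun x => (K%:E * (expR (- c * x))%:E)%E).
  by apply: integrableZl => //; exact: integrable_expRM_itv_oo.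
by apply: eq_integrable => // x _; rewrite EFinM.
Qed.

Lemma integral_scaled_expRM_itv_oo (K c a : R) : 0 < c ->
  (\int[mu]_(x in `]a, +oo[) (K * expR (- c * x))%:E = (K * (expR (- c * a) / c))%:E)%E.
Proof.
move=> c0; under eq_integral do rewrite EFinM.
by rewrite integralZl ?integral_expRM_itv_oo //; exact: integrable_expRM_itv_oo.
Qed.

Lemma affine_expR_density_split (lam A B b x : R) :
  (A + B * expR (b * x)) * (lam * expR (- (lam * x))) =
  A * lam * expR (- lam * x) + B * lam * expR (- (lam - b) * x).
Proof.
have -> : expR (- (lam - b) * x) = expR (b * x) * expR (- (lam * x)).
  by rewrite -expRD; congr expR; ring.
by rewrite mulNr; ring.
Qed.

Lemma integrable_affine_expR_density (lam A B b a : R) : 0 < lam -> b < lam ->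
  mu.-integrable `]a, +oo[
    (fun x => ((A + B * expR (b * x))%:E * (lam * expR (- (lam * x)))%:E)%E).
Proof.
move=> l0; rewrite -subr_gt0 => lb0.
have : mu.-integrable `]a, +oo[ (fun x =>
    (A * lam * expR (- lam * x))%:E + (B * lam * expR (- (lam - b) * x))%:E)%E.
  by apply: integrableD => //; exact: integrable_scaled_expRM_itv_oo.
by apply: eq_integrable => // x _; rewrite -EFinM affine_expR_density_split.
Qed.

Lemma integral_affine_expR_density (lam A B b a : R) : 0 < lam -> b < lam ->
  (\int[mu]_(x in `]a, +oo[) ((A + B * expR (b * x))%:E * (lam * expR (- (lam * x)))%:E)
   = (A * expR (- lam * a) + B * lam * expR (- (lam - b) * a) / (lam - b))%:E)%E.
Proof.
move=> l0 bl; have lb0 : 0 < lam - b by rewrite subr_gt0.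
under eq_integral do rewrite -EFinM affine_expR_density_split EFinD.
rewrite integralD //; try exact: integrable_scaled_expRM_itv_oo.
rewrite !integral_scaled_expRM_itv_oo // -EFinD; congr EFin.
by field; rewrite !gt_eqF.
Qed.

Lemma integral_itv_oo_add_tail (f h : R -> \bar R) (a d : R) : a <= d ->
  mu.-integrable `]a, +oo[ f -> mu.-integrable `]d, +oo[ h ->
  (\int[mu]_(x in `]a, +oo[) (f x + (h \_ `]d, +oo[) x) =
   \int[mu]_(x in `]a, +oo[) f x + \int[mu]_(x in `]d, +oo[) h x)%E.
Proof.
move=> ad intf inth; rewrite integralD //; last first.
  by apply: (@integrableS _ _ _ _ setT) => //; exact/(integrable_mkcond _ _).1.
rewrite -integral_mkcondr setIidr // => x /=.
by rewrite !in_itv /= !andbT; exact: le_lt_trans.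
Qed.

End exponential_calculus.

Lemma expR_mul_sub_lt {R : realType} (M z y E : R) :
  0 <= M -> 0 <= M - z -> M * y < z -> E <= expR y -> E * (M - z) < M.
Proof.
move=> M0 Mz Myz Ey.
have Mexp : M * (1 - y) <= M * expR (- y) by rewrite ler_wpM2l // expR_ge1Dx.
have Mz_lt : M - z < M * expR (- y) by nra.
apply: (le_lt_trans (ler_wpM2r Mz Ey)).
rewrite -[ltRHS]mulr1 -[1 in ltRHS](expRxMexpNx_1 y) mulrCA.
by rewrite ltr_pM2l ?expR_gt0.
Qed.

Definition stop_loss {R : realDomainType} (d x : R) : R := Num.max (x - d) 0.

Lemma sub_stop_loss {R : realDomainType} (d x : R) : x - stop_loss d x = Num.min x d.
Proof.
rewrite /stop_loss; have [xd|dx] := leP x d.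
  by rewrite (max_r _) ?subr0 // subr_le0.
by rewrite (max_l _) ?subKr // subr_ge0 ltW.
Qed.

Lemma Ic_stop_loss {R : realType} (d : R) : 0 <= d -> Ic (stop_loss d).
Proof.
rewrite /stop_loss => d0; split.
  move=> x x0; apply/andP; split; first by rewrite le_max lexx orbT.
  by rewrite ge_max x0 andbT lerBlDr lerDl.
move=> x y y0 yx.
have [h1|h1] := leP 0 (x - d); have [h2|h2] := leP 0 (y - d);
  rewrite ?(max_l h1) ?(max_l h2) ?(max_r (ltW h1)) ?(max_r (ltW h2));
  apply/andP; split; lra.
Qed.

Lemma ktilde_le_linear {R : realType} (th al p : R) : 0 <= al ->
  ktilde th al p <= (1 + th + al) * p.
Proof.
move=> al0; have : 0 <= al * p ^+ 2 by rewrite mulr_ge0 // sqr_ge0.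
rewrite /ktilde; nra.
Qed.

Lemma fine_le_EFin {R : realType} (x : \bar R) (b : R) :
  0 <= b -> (x <= b%:E)%E -> fine x <= b.
Proof. by case: x => [r| |] //= b0; rewrite lee_fin. Qed.

Section model.
Context {R : realType}.
Variables (q lam : R).
Hypotheses (lam_gt0 : 0 < lam) (q_ge0 : 0 <= q) (q_le1 : q <= 1).
Local Notation mu := (@lebesgue_measure R).

(* [E[exp (b X)]], finite for [b < lam]. *)
Definition mgfX (b : R) : R := 1 - q + q * lam / (lam - b).

Lemma mgfX_ge1 (b : R) : 0 <= b -> b < lam -> 1 <= mgfX b.
Proof.
move=> b0 bl; have lb0 : 0 < lam - b by rewrite subr_gt0.
have -> : mgfX b = 1 + q * b / (lam - b) by rewrite /mgfX; field; rewrite gt_eqF.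
by rewrite lerDl divr_ge0 ?mulr_ge0 // ltW.
Qed.

Lemma mgfX_unbounded (E : R) : 0 < q -> 0 < E -> exists2 b, b < lam & E < mgfX b.
Proof.
move=> q0 E0; have qE0 : 0 < q + E by rewrite addr_gt0.
exists (lam - q * lam / (q + E)).
  by rewrite ltrBlDr ltrDl divr_gt0 ?mulr_gt0.
have -> : mgfX (lam - q * lam / (q + E)) = 1 + E.
  by rewrite /mgfX subKr; field; rewrite !gt_eqF.
by rewrite ltrDr.
Qed.

Lemma eq_EX (g g' : R -> \bar R) : (forall x, 0 <= x -> g x = g' x) ->
  EX q lam g = EX q lam g'.
Proof.
move=> gg'; rewrite /EX gg' //; congr (_ + _ * _)%E.
by apply: eq_integral => x; rewrite inE /= in_itv /= andbT => /ltW x0; rewrite gg'.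
Qed.

Lemma le_EX (g g' : R -> \bar R) :
  (forall x, 0 <= x -> (g x <= g' x)%E) -> (EX q lam g <= EX q lam g')%E.
Proof.
move=> gg'; rewrite /EX; apply: leeD.
  by apply: lee_wpmul2l; [rewrite lee_fin subr_ge0 | apply: gg'].
apply: lee_wpmul2l; first by rewrite lee_fin.
apply: le_integral_pointwise => x; rewrite /= in_itv /= andbT => x0.
by apply: lee_wpmul2r; [rewrite lee_fin mulr_ge0 ?expR_ge0 // ltW | exact/gg'/ltW].
Qed.

Lemma EX_affine_expR (A B b : R) : b < lam ->
  EX q lam (fun x => (A + B * expR (b * x))%:E) = (A + B * mgfX b)%:E.
Proof.
move=> bl; rewrite /EX integral_affine_expR_density // !mulr0 expR0 !mulr1.
by rewrite -!EFinM -EFinD /mgfX; congr EFin; ring.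
Qed.

(* Above [d] the integrand differs from that of [EX_affine_expR] by another
   affine-exponential term, integrated over ]d, +oo[. *)
Lemma EX_affine_expR_min (A B b d : R) : b < lam -> 0 <= d ->
  EX q lam (fun x => (A + B * expR (b * Num.min x d))%:E) =
  (A + B * (mgfX b - q * b / (lam - b) * expR (- (lam - b) * d)))%:E.
Proof.
move=> bl d0; have lb0 : 0 < lam - b by rewrite subr_gt0.
pose tail x := ((B * expR (b * d) + (- B) * expR (b * x))%:E *
                (lam * expR (- (lam * x)))%:E)%E.
rewrite /EX (min_l d0); transitivity
  ((1 - q)%:E * (A + B * expR (b * 0))%:E + q%:E * \int[mu]_(x in `]0%R, +oo[)
     ((A + B * expR (b * x))%:E * (lam * expR (- (lam * x)))%:E
      + (tail \_ `]d, +oo[) x))%E.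
  congr (_ + _ * _)%E; apply: eq_integral => x _; rewrite /patch /tail.
  case: ifPn => [/set_mem /= /[!in_itv] /= /[!andbT] dx | /negP xd].
    by rewrite (min_r (ltW dx)) -!EFinM -EFinD; congr EFin; ring.
  rewrite min_l ?adde0 // leNgt; apply/negP => dx; apply/xd/mem_set.
  by rewrite /= in_itv /= dx.
rewrite integral_itv_oo_add_tail //; try exact: integrable_affine_expR_density.
rewrite !integral_affine_expR_density // -!EFinM -!EFinD /mgfX; congr EFin.
have -> : B * expR (b * d) * expR (- lam * d) = B * expR (- (lam - b) * d).
  by rewrite -mulrA -expRD; congr (_ * expR _); ring.
by rewrite !mulr0 expR0; field; rewrite gt_eqF.
Qed.

Lemma premium_zero (th al : R) : premium q lam th al (fun _ => 0) = 0.
Proof.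
rewrite /premium integral0_eq // => t /= /[!in_itv] /= /[!andbT] t0.
rewrite /survI ltNge t0 /= /EX (@integral0_eq _ _ _ _ _ (fun x => (0%:E * _)%E)).
  by rewrite !mule0 adde0 /= /ktilde expr2 !mulr0 subr0 mulr0 addr0.
by move=> x _; rewrite mul0e.
Qed.

(* Chernoff bound: [1_{t < (x - d)_+} <= exp (k (x - d - t))] for [t >= 0]. *)
Lemma survI_stop_loss_le (d k t : R) : 0 < k -> k < lam -> 0 <= t ->
  survI q lam (stop_loss d) t <= mgfX k * expR (- k * (d + t)).
Proof.
move=> k0 kl t0; have M1 := mgfX_ge1 k (ltW k0) kl.
rewrite /survI; apply: fine_le_EFin; first by rewrite mulr_ge0 ?expR_ge0 //; lra.
have chernoff x : 0 <= x -> ((if t < stop_loss d x then 1 else 0)%:E <=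
    (0 + expR (- k * (d + t)) * expR (k * x))%:E)%E.
  move=> x0; rewrite lee_fin add0r -expRD; case: ifPn => [|_]; last exact: expR_ge0.
  rewrite /stop_loss lt_max (ltNge t 0) t0 orbF => txd.
  by apply: le_trans (expR_ge1Dx _); rewrite lerDl; nra.
apply: le_trans (le_EX _ _ chernoff) _.
by rewrite EX_affine_expR // add0r mulrC.
Qed.

Section pricing.
Variables (th al : R).
Hypotheses (th_ge0 : 0 <= th) (al_ge0 : 0 <= al).

Lemma premium_stop_loss_le (d k : R) : 0 < k -> k < lam ->
  premium q lam th al (stop_loss d) <= (1 + th + al) * mgfX k * expR (- k * d) / k.
Proof.
move=> k0 kl; have M1 := mgfX_ge1 k (ltW k0) kl.
have c0 : 0 <= 1 + th + al by rewrite !addr_ge0.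
pose K := (1 + th + al) * mgfX k * expR (- k * d).
rewrite /premium; apply: fine_le_EFin.
  by rewrite divr_ge0 ?mulr_ge0 ?expR_ge0 // ?ltW //; lra.
apply: (@le_trans _ _ (\int[mu]_(t in `[0%R, +oo[) (K * expR (- k * t))%:E)%E).
  apply: le_integral_pointwise => t /= /[!in_itv] /= /[!andbT] t0; rewrite lee_fin.
  apply: le_trans; first exact: ktilde_le_linear.
  rewrite /K -!mulrA ler_wpM2l // -expRD -mulrDr.
  exact: survI_stop_loss_le.
rewrite -integral_itv_obnd_cbnd; last first.
  by apply/measurable_EFinP/measurable_funM => //; exact: measurable_expRM.
by rewrite integral_scaled_expRM_itv_oo // mulr0 expR0 mul1r.
Qed.

(* The deductible [d] is chosen with [exp (gamma d / 2) = L], so that the premium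
   term [exp (- (lam - gamma / 2) d)] is the loss reduction [exp (- (lam - gamma) d)]
   times [1 / L]. *)
Lemma exists_profitable_deductible (gamma : R) : 0 < q -> 0 < gamma -> gamma < lam ->
  exists2 d, 0 <= d &
    expR (gamma * premium q lam th al (stop_loss d)) *
      (mgfX gamma - q * gamma / (lam - gamma) * expR (- (lam - gamma) * d))
    < mgfX gamma.
Proof.
move=> q0 g0 gl; have lg0 : 0 < lam - gamma by rewrite subr_gt0.
pose k := lam - gamma / 2; have k0 : 0 < k by rewrite /k; lra.
have kl : k < lam by rewrite /k; lra.
pose C := gamma * ((1 + th + al) * mgfX k / k).
pose M := mgfX gamma; pose a := q * gamma / (lam - gamma).
have C0 : 0 <= C.
  apply: mulr_ge0; first exact: ltW.
  apply: divr_ge0; last exact: ltW.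
  by apply: mulr_ge0; [rewrite !addr_ge0 | have := mgfX_ge1 k (ltW k0) kl; lra].
have M1 : 1 <= M by exact: mgfX_ge1 gamma (ltW g0) gl.
have a0 : 0 < a by rewrite /a divr_gt0 ?mulr_gt0.
pose L := 1 + M * C / a.
have L1 : 1 <= L.
  by rewrite /L lerDl; apply: divr_ge0; [apply: mulr_ge0 => //; lra | exact: ltW].
pose d := 2 * ln L / gamma.
have d0 : 0 <= d by rewrite divr_ge0 ?mulr_ge0 ?ln_ge0 // ltW.
exists d => //.
pose dl := expR (- (lam - gamma) * d).
have dl0 : 0 < dl by exact: expR_gt0.
have dl1 : dl <= 1.
  by rewrite -expR0 ler_expR mulNr oppr_le0 mulr_ge0 // ltW.
have kd : expR (- k * d) = dl / L.
  rewrite -[L in dl / L]lnK ?posrE; last lra.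
  by rewrite -expRN -expRD /k /d; congr expR; field; rewrite gt_eqF.
apply: (@expR_mul_sub_lt _ M (a * dl) (C * dl / L)); first lra.
- have -> : M - a * dl = 1 + q * gamma * (1 - dl) / (lam - gamma).
    by rewrite /M /a /mgfX; field; rewrite gt_eqF.
  by rewrite addr_ge0 // divr_ge0 ?(ltW lg0) // !mulr_ge0 ?(ltW g0) // subr_ge0.
- have L0 : 0 < L by lra.
  have MCa : M * C / L < a.
    rewrite ltr_pdivrMr //.
    have -> : a * L = a + M * C by rewrite /L; field; rewrite gt_eqF.
    lra.
  have -> : M * (C * dl / L) = M * C / L * dl by field; rewrite gt_eqF.
  by rewrite ltr_pM2r.
- have -> : C * dl / L = gamma * ((1 + th + al) * mgfX k * expR (- k * d) / k).
    by rewrite kd /C; field; rewrite !gt_eqF //; lra.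
  by rewrite ler_expR ler_wpM2l ?(ltW g0) // premium_stop_loss_le.
Qed.

Section exponential_utility.
Variables (gamma w : R) (u : R -> R).
Hypotheses (gamma_gt0 : 0 < gamma)
  (u_cara : forall y, u y = u 0 + gamma^-1 - gamma^-1 * expR (- gamma * y)).

Let c := u 0 + gamma^-1.
Let B := gamma^-1 * expR (- gamma * w).

Lemma EU_cara (I : R -> R) : EU q lam th al w u I =
  EX q lam (fun x => (c - B * expR (gamma * premium q lam th al I) *
                            expR (gamma * (x - I x)))%:E).
Proof.
rewrite /EU; congr EX; apply/funext => x; rewrite u_cara /c /B -!mulrA -!expRD.
by congr (EFin (_ - _ * expR _)); ring.
Qed.

(* For [gamma >= lam] the expected utility of [I = 0] is [-oo]; the bound holds
   for every exponent [b] at which the moment generating function is finite. *)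
Lemma EU_no_insurance_le (b : R) : b <= gamma -> b < lam ->
  (EU q lam th al w u (fun _ => 0%R) <= (c - B * mgfX b)%:E)%E.
Proof.
move=> bg bl; have B0 : 0 <= B by rewrite mulr_ge0 ?invr_ge0 ?expR_ge0 ?ltW.
rewrite EU_cara premium_zero mulr0 expR0 mulr1.
have -> : c - B * mgfX b = c + (- B) * mgfX b by rewrite mulNr.
rewrite -EX_affine_expR //; apply: le_EX => // x x0.
by rewrite lee_fin subr0 mulNr lerD2l lerN2 ler_wpM2l // ler_expR ler_wpM2r.
Qed.

Lemma EU_stop_loss (d : R) : gamma < lam -> 0 <= d ->
  EU q lam th al w u (stop_loss d) =
  (c - B * expR (gamma * premium q lam th al (stop_loss d)) *
     (mgfX gamma - q * gamma / (lam - gamma) * expR (- (lam - gamma) * d)))%:E.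
Proof.
move=> gl d0; rewrite EU_cara.
set E := expR (gamma * _).
rewrite (@eq_EX _ (fun x => (c + (- (B * E)) * expR (gamma * Num.min x d))%:E)).
  by rewrite EX_affine_expR_min // mulNr.
by move=> x _; rewrite sub_stop_loss mulNr.
Qed.

Lemma EU_full_insurance : EU q lam th al w u (stop_loss 0) =
  (c - B * expR (gamma * premium q lam th al (stop_loss 0)))%:E.
Proof.
rewrite EU_cara.
set E := expR (gamma * _).
rewrite (@eq_EX _ (fun x => (c - B * E + 0 * expR (0 * x))%:E)).
  by rewrite EX_affine_expR // mul0r addr0.
by move=> x x0; rewrite sub_stop_loss (min_r x0) mulr0 expR0 mulr1 mul0r addr0.
Qed.

Lemma no_insurance_not_optimal : 0 < q ->
  exists I : R -> R, Ic I /\ (EU q lam th al w u (fun _ => 0%R) < EU q lam th al w u I)%E.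
Proof.
move=> q_gt0; have B_gt0 : 0 < B by rewrite mulr_gt0 ?invr_gt0 ?expR_gt0.
have [gl|lg] := ltP gamma lam.
- have [d d0 gain] := exists_profitable_deductible gamma q_gt0 gamma_gt0 gl.
  exists (stop_loss d); split; first exact: Ic_stop_loss.
  rewrite EU_stop_loss //; apply: le_lt_trans (EU_no_insurance_le _ (lexx gamma) gl) _.
  by rewrite lte_fin ltrD2l ltrN2 -mulrA ltr_pM2l.
- set E := expR (gamma * premium q lam th al (stop_loss 0)).
  have [b bl Eb] := mgfX_unbounded E q_gt0 (expR_gt0 _).
  exists (stop_loss 0); split; first exact: Ic_stop_loss.
  rewrite EU_full_insurance; apply: le_lt_trans (EU_no_insurance_le _ _ bl) _.
    exact/ltW/(lt_le_trans bl lg).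
  by rewrite lte_fin ltrD2l ltrN2 ltr_pM2l.
Qed.

End exponential_utility.
End pricing.
End model.

Theorem proposition4p5 (R : realType) (q lam theta alpha gamma w : R) (u : R -> R) :
  0 < q -> q <= 1 -> 0 < lam -> 0 <= theta -> 0 <= alpha -> 0 < gamma ->
  (forall x : R, is_derive x 1 u (expR (- (gamma * x)))) ->
  exists I : R -> R, Ic I /\
    (EU q lam theta alpha w u (fun _ => 0%R) < EU q lam theta alpha w u I)%E.
Proof.
move=> q_gt0 q_le1 lam_gt0 th_ge0 al_ge0 gamma_gt0 du.
exact: (@no_insurance_not_optimal R q lam lam_gt0 (ltW q_gt0) q_le1 theta alpha
  th_ge0 al_ge0 gamma w u gamma_gt0 (cara_utility u gamma gamma_gt0 du) q_gt0).
Qed.
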